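(* Let $W=e^{-q}$ be the bivariate Freud weight and $\{\mathbb{P}_n\}$ an orthonormal polynomial system for it, with matrices $G^n_k$, $G_n$ as in the context. Write $x_1=x$, $x_2=y$, and for $i=1,2$ let $F^n_{m,i}$ ($(n+1)\times(m+1)$ real matrices) be the coefficients of the expansion $x_i^2\mathbb{P}_n=\sum_{m=0}^{n+2}F^n_{m,i}\mathbb{P}_m$. Then for $n\geqslant2$ and $i=1,2$, $$F^n_{n,i}=G^n_{n-2}G_{n-2}^{-1}(F^n_{n-2,i})^T-F^n_{n+2,i}G^{n+2}_nG_n^{-1}.$$
   Context: Parameters $a_{4,0},a_{2,2},a_{0,4}\geqslant0$, $a_{2,0},a_{0,2}\in\mathbb{R}$, $a_{4,0}+a_{2,2}>0$, $a_{2,2}+a_{0,4}>0$; $q(x,y)=a_{4,0}x^4+a_{2,2}x^2y^2+a_{0,4}y^4+a_{2,0}x^2+a_{0,2}y^2$, $W=e^{-q}$, inner product $(f,g)=\iint_{\mathbb{R}^2}fgW\,dx\,dy$ (entrywise on vectors). $\mathbb{X}_n=(x^n,x^{n-1}y,\dots,y^n)^T$. An orthonormal polynomial system: column vectors $\mathbb{P}_n=(P_{n,0},\dots,P_{n,n})^T$ of linearly independent polynomials of exact total degree $n$ with $(\mathbb{P}_n,\mathbb{P}_m^T)=\delta_{nm}I_{n+1}$ (the entries of all $\mathbb{P}_m$ form a basis of all polynomials, so the expansion exists and is unique). Write $\mathbb{P}_n=\sum_kG^n_k\mathbb{X}_k$ with constant $(n+1)\times(k+1)$ matrices, $G_n:=G^n_n$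 invertible. *)

From HB Require Import structures.
From mathcomp Require Import all_boot all_order all_algebra.
From mathcomp Require Import all_classical all_reals all_analysis.
Set Implicit Arguments. Unset Strict Implicit. Unset Printing Implicit Defensive.
Import Order.TTheory GRing.Theory Num.Theory.
Import numFieldNormedType.Exports.
Local Open Scope classical_set_scope.
Local Open Scope ring_scope.

Definition leb2 (R : realType) :=
  ((@lebesgue_measure R) \x (@lebesgue_measure R))%E.

Definition freud_q (R : realType) (a40 a22 a04 a20 a02 : R) (z : R * R) : R :=
  a40 * z.1 ^+ 4 + a22 * z.1 ^+ 2 * z.2 ^+ 2 + a04 * z.2 ^+ 4
  + a20 * z.1 ^+ 2 + a02 * z.2 ^+ 2.

Definition freud_W (R : realType) (a40 a22 a04 a20 a02 : R) (z : R * R) : R :=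
  expR (- freud_q a40 a22 a04 a20 a02 z).

Definition Xvec (R : realType) (k : nat) (z : R * R) : 'cV[R]_k.+1 :=
  \col_(l < k.+1) (z.1 ^+ (k - l) * z.2 ^+ l).

(* Coefficient family: G n k : 'M_(n+1,k+1) (only k <= n is used). *)
Definition coefFamily (R : realType) := forall n k : nat, 'M[R]_(n.+1, k.+1).

Definition Pvec (R : realType) (G : coefFamily R) (n : nat) (z : R * R)
  : 'cV[R]_n.+1 :=
  \sum_(k < n.+1) (G n k *m Xvec k z).

Definition orthonormal_system (R : realType) (W : R * R -> R)
  (G : coefFamily R) : Prop :=
  forall (n m : nat) (j : 'I_n.+1) (l : 'I_m.+1),
    (@leb2 R).-integrable setT
       (fun z => ((Pvec G n z j 0 * Pvec G m z l 0 * W z)%R)%:E) /\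
    Rintegral (@leb2 R) setT (fun z => Pvec G n z j 0 * Pvec G m z l 0 * W z)
      = (if (n == m) && (val j == val l) then 1 else 0).

Definition xcoord (R : realType) (i : 'I_2) (z : R * R) : R :=
  if val i == 0%N then z.1 else z.2.

From HB Require Import structures.
From mathcomp Require Import all_boot all_order all_algebra.
From mathcomp Require Import all_classical all_reals all_analysis measurable_realfun.
From mathcomp Require Import ring lra zify.
Import Order.TTheory GRing.Theory Num.Theory.
Set Implicit Arguments. Unset Strict Implicit. Unset Printing Implicit Defensive.
Local Open Scope ring_scope.
Local Open Scope classical_set_scope.

(* Expanding [x_i^2 X_k = L_k X_(k+2)] with a 0/1 shift matrix [L_k] gives
   [F^n_m = (x_i^2 P_n, P_m^T) = sum_k G^n_k L_k (X_(k+2), P_m^T)].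
   By triangularity, [(X_j, P_m^T)] vanishes for [j < m] and equals [G_m^-1]
   for [j = m].  Since W is even, P_m only involves monomials of degree
   congruent to m mod 2, so [(X_(m+1), P_m^T) = 0]; expanding
   [(P_(m+2), P_m^T) = 0] then gives
   [(X_(m+2), P_m^T) = - G_(m+2)^-1 G^(m+2)_m G_m^-1].  Substituting these
   values into [F^n_n], [F^n_(n+2)] and [F^(n-2)_n = (F^n_(n-2))^T] yields the
   identity. *)

Section BivariateOrthogonality.
Variable R : realType.

Definition oppz (z : measurableTypeR R * measurableTypeR R) :
  measurableTypeR R * measurableTypeR R := (- z.1, - z.2).

Lemma measurable_oppz : measurable_fun setT oppz.
Proof.
apply: measurable_fun_pair.
- apply: measurableT_comp; [exact: oppr_measurable | exact: measurable_fst].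
- apply: measurableT_comp; [exact: oppr_measurable | exact: measurable_snd].
Qed.

Lemma leb2_oppz (A : set (measurableTypeR R * measurableTypeR R)) :
  measurable A -> @leb2 R A = pushforward (@leb2 R) oppz A.
Proof.
move=> mA.
have := @product_measure_unique _ _ _ _ R lebesgue_measure lebesgue_measure
  (measure_function_pushforward__canonical__measure_function_Measure
     (@leb2 R) measurable_oppz).
apply => // B C mB mC /=; rewrite /pushforward.
have -> : oppz @^-1` (B `*` C) = ((-%R) @^-1` B) `*` ((-%R) @^-1` C).
  by apply/seteqP; split => -[x y].
rewrite /leb2 product_measure1E -?lebesgue_measureN //.
- by rewrite -[X in measurable X]setTI; exact: oppr_measurable.
- by rewrite -[X in measurable X]setTI; exact: oppr_measurable.
Qed.

Lemma Rintegral_odd (g : R * R -> R) :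
  (@leb2 R).-integrable setT (EFin \o g) ->
  (forall z, g (- z.1, - z.2) = - g z) ->
  Rintegral (@leb2 R) setT g = 0.
Proof.
move=> ig godd.
have mg : measurable_fun setT (EFin \o g) := measurable_int _ ig.
have ig_opp : (@leb2 R).-integrable (oppz @^-1` setT) ((EFin \o g) \o oppz).
  rewrite preimage_setT; apply: eq_integrable (integrableN ig) => // z _ /=.
  by rewrite /oppz godd.
have gN : Rintegral (@leb2 R) setT g = - Rintegral (@leb2 R) setT g.
  rewrite -mulN1r -RintegralZl //; congr fine.
  rewrite (eq_measure_integral
    (measure_function_pushforward__canonical__measure_function_Measure
       (@leb2 R) measurable_oppz)); last by move=> A mA _; exact: leb2_oppz.
  rewrite (integral_pushforward measurable_oppz mg ig_opp) // preimage_setT.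
  by apply: eq_integral => z _ /=; rewrite /oppz godd mulN1r.
by move: gN; set I := Rintegral _ _ _; lra.
Qed.

Section WeightedInnerProduct.
Variable W : R * R -> R.

Definition wintegrable (h : R * R -> R) :=
  (@leb2 R).-integrable setT (fun z => (h z * W z)%:E).

Definition wint (h : R * R -> R) := Rintegral (@leb2 R) setT (fun z => h z * W z).

Lemma wintegrableZ c h : wintegrable h -> wintegrable (fun z => c * h z).
Proof.
move=> ih; apply: eq_integrable (integrableZl measurableT c ih) => // z _ /=.
by rewrite -EFinM mulrA.
Qed.

Lemma wintZ c h : wintegrable h -> wint (fun z => c * h z) = c * wint h.
Proof.
by move=> ih; rewrite /wint -RintegralZl //; apply: eq_Rintegral => z _; rewrite mulrA.
Qed.

Lemma wintegrable_sum (I : Type) (s : seq I) (h : I -> R * R -> R) :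
  (forall k, wintegrable (h k)) -> wintegrable (fun z => \sum_(k <- s) h k z).
Proof.
move=> ih; rewrite /wintegrable.
under eq_fun do rewrite mulr_suml -sumEFin.
by apply: integrable_sum => // k _; exact: ih.
Qed.

Lemma wint_sum (I : Type) (s : seq I) (h : I -> R * R -> R) :
  (forall k, wintegrable (h k)) ->
  wint (fun z => \sum_(k <- s) h k z) = \sum_(k <- s) wint (h k).
Proof.
move=> ih; elim: s => [|k s IHs].
  rewrite big_nil /wint; under eq_Rintegral do rewrite big_nil mul0r.
  by rewrite Rintegral_cst // mul0r.
rewrite big_cons -IHs /wint -RintegralD //; [|exact: ih|exact: wintegrable_sum].
by apply: eq_Rintegral => z _; rewrite big_cons mulrDl.
Qed.

Definition ip_integrable r s (f : R * R -> 'cV[R]_r) (g : R * R -> 'cV[R]_s) :=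
  forall a b, wintegrable (fun z => f z a 0 * g z b 0).

(* [ip f g] is the paper's matrix inner product [(f, g^T)]. *)
Definition ip r s (f : R * R -> 'cV[R]_r) (g : R * R -> 'cV[R]_s) : 'M[R]_(r, s) :=
  \matrix_(a, b) wint (fun z => f z a 0 * g z b 0).

Lemma ip_integrableC r s (f : R * R -> 'cV[R]_r) (g : R * R -> 'cV[R]_s) :
  ip_integrable f g -> ip_integrable g f.
Proof.
by move=> ifg a b; under eq_fun do rewrite mulrC; exact: ifg.
Qed.

Lemma trmx_ip r s (f : R * R -> 'cV[R]_r) (g : R * R -> 'cV[R]_s) :
  (ip f g)^T = ip g f.
Proof.
by apply/matrixP => a b; rewrite !mxE; under eq_fun do rewrite mulrC.
Qed.

Section LinearCombination.
Variables (r s e : nat) (c : nat -> nat).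
Variables (h : forall l, R * R -> 'cV[R]_(c l)) (E : forall l, 'M[R]_(r, c l)).
Variable g : R * R -> 'cV[R]_s.
Hypothesis ihg : forall l, (l < e)%N -> ip_integrable (h l) g.

Lemma lincomb_entry a b z :
  (\sum_(l < e) E l *m h l z) a 0 * g z b 0 =
  \sum_(l < e) \sum_(k < c l) E l a k * (h l z k 0 * g z b 0).
Proof.
rewrite summxE mulr_suml; apply: eq_bigr => l _.
by rewrite mxE mulr_suml; apply: eq_bigr => k _; rewrite mulrA.
Qed.

Lemma ip_integrable_suml : ip_integrable (fun z => \sum_(l < e) E l *m h l z) g.
Proof.
move=> a b; under eq_fun do rewrite lincomb_entry.
apply: wintegrable_sum => l; apply: wintegrable_sum => k.
exact/wintegrableZ/ihg.
Qed.

Lemma ip_suml :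
  ip (fun z => \sum_(l < e) E l *m h l z) g = \sum_(l < e) E l *m ip (h l) g.
Proof.
apply/matrixP => a b; rewrite !mxE summxE.
under eq_fun do rewrite lincomb_entry.
rewrite wint_sum => [|l]; last by apply: wintegrable_sum => k; exact/wintegrableZ/ihg.
apply: eq_bigr => l _; rewrite mxE wint_sum => [|k]; last exact/wintegrableZ/ihg.
by apply: eq_bigr => k _; rewrite wintZ ?mxE //; exact: ihg.
Qed.

End LinearCombination.

Lemma ip_sumr r s e (c : nat -> nat) (h : forall l, R * R -> 'cV[R]_(c l))
    (E : forall l, 'M[R]_(s, c l)) (f : R * R -> 'cV[R]_r) :
  (forall l, (l < e)%N -> ip_integrable f (h l)) ->
  ip f (fun z => \sum_(l < e) E l *m h l z) = \sum_(l < e) ip f (h l) *m (E l)^T.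
Proof.
move=> ifh; rewrite -trmx_ip ip_suml => [|l /ifh/ip_integrableC //].
by rewrite linear_sum /=; apply: eq_bigr => l _; rewrite trmx_mul trmx_ip.
Qed.

End WeightedInnerProduct.

Section OrthonormalSystem.
Variables (W : R * R -> R) (G : coefFamily R).
Hypothesis hON : orthonormal_system W G.
Hypothesis hGinv : forall n, G n n \in unitmx.

Local Notation P := (Pvec G).

Lemma ip_integrable_PP n m : ip_integrable W (P n) (P m).
Proof. by move=> a b; exact: (hON a b).1. Qed.

Lemma ip_PP_neq n m : n != m -> ip W (P n) (P m) = 0.
Proof.
by move=> nm; apply/matrixP => a b; rewrite !mxE /wint (hON a b).2 (negbTE nm).
Qed.

Lemma ip_PP n : ip W (P n) (P n) = 1%:M.
Proof.
apply/matrixP => a b; rewrite !mxE /wint (hON a b).2 eqxx /=.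
by rewrite val_eqE; case: (a == b).
Qed.

Definition in_Pspan r d (f : R * R -> 'cV[R]_r) :=
  exists D : forall j, 'M[R]_(r, j.+1), forall z, f z = \sum_(j < d) D j *m P j z.

Lemma in_PspanD r d (f g : R * R -> 'cV[R]_r) :
  in_Pspan d f -> in_Pspan d g -> in_Pspan d (fun z => f z + g z).
Proof.
move=> [D hD] [E hE]; exists (fun j => D j + E j) => z.
by rewrite hD hE -big_split; apply: eq_bigr => j _; rewrite mulmxDl.
Qed.

Lemma in_Pspan_mull r t d (A : 'M[R]_(t, r)) (f : R * R -> 'cV[R]_r) :
  in_Pspan d f -> in_Pspan d (fun z => A *m f z).
Proof.
move=> [D hD]; exists (fun j => A *m D j) => z.
by rewrite hD mulmx_sumr; apply: eq_bigr => j _; rewrite mulmxA.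
Qed.

Lemma in_Pspan_sum r d K (c : nat -> nat) (f : forall k, R * R -> 'cV[R]_(c k))
    (A : forall k, 'M[R]_(r, c k)) :
  (forall k, (k < K)%N -> in_Pspan d (f k)) ->
  in_Pspan d (fun z => \sum_(k < K) A k *m f k z).
Proof.
elim: K => [|K IHK] hf.
  by exists (fun j => 0) => z; rewrite big_ord0 big1 // => j _; rewrite mul0mx.
under eq_fun do rewrite big_ord_recr.
by apply: in_PspanD; [apply: IHK => k /ltnW/hf | apply/in_Pspan_mull/hf].
Qed.

Lemma in_Pspan_widen r d d' (f : R * R -> 'cV[R]_r) :
  (d <= d')%N -> in_Pspan d f -> in_Pspan d' f.
Proof.
move=> dd' [D hD]; exists (fun j => if (j < d)%N then D j else 0) => z.
rewrite hD (big_ord_widen d' (fun j => D j *m P j z)) // big_mkcond /=.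
by apply: eq_bigr => j _; case: ifP; rewrite ?mul0mx.
Qed.

Lemma in_Pspan_P m : in_Pspan m.+1 (P m).
Proof.
exists (fun j => \matrix_(a < m.+1, b < j.+1) ((j == m) && (val a == val b))%:R) => z.
rewrite big_ord_recr /= big1 ?add0r => [|j _]; last first.
  rewrite (_ : \matrix_(a, b) _ = 0) ?mul0mx //.
  by apply/matrixP => a b; rewrite !mxE (ltn_eqF (ltn_ord j)).
apply/matrixP => a c; rewrite !mxE (bigD1 a) //= !mxE !eqxx mul1r big1 ?addr0 //.
by move=> b ba; rewrite mxE val_eqE eq_sym (negbTE ba) mul0r.
Qed.

Lemma in_Pspan_X k : in_Pspan k.+1 (Xvec k).
Proof.
elim/ltn_ind: k => k IHk.
have Xk z : Xvec k z = invmx (G k k) *m P k z +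
    \sum_(l < k) (- (invmx (G k k) *m G k l)) *m Xvec l z.
  rewrite /Pvec big_ord_recr /= mulmxDr mulmxA mulVmx // mul1mx.
  rewrite mulmx_sumr -addrA addrC -addrA -big_split /= big1 ?addr0 // => l _.
  by rewrite mulNmx mulmxA addNr.
rewrite (funext Xk); apply: in_PspanD; first exact/in_Pspan_mull/in_Pspan_P.
apply: (in_Pspan_sum (f := @Xvec R) (fun l => - (invmx (G k k) *m G k l))) => l lk.
exact: in_Pspan_widen (leqW lk) (IHk l lk).
Qed.

Lemma ip_integrable_Pspan r s d e (f : R * R -> 'cV[R]_r) (g : R * R -> 'cV[R]_s) :
  in_Pspan d f -> in_Pspan e g -> ip_integrable W f g.
Proof.
move=> [D /funext->] [E /funext->].
apply: (ip_integrable_suml (c := succn) (h := P)) => j _.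
apply/ip_integrableC/(ip_integrable_suml (c := succn) (h := P)) => l _.
exact: ip_integrable_PP.
Qed.

Lemma ip_Pspan_P r d (D : forall j, 'M[R]_(r, j.+1)) (f : R * R -> 'cV[R]_r) m :
  (forall z, f z = \sum_(j < d) D j *m P j z) ->
  ip W f (P m) = if (m < d)%N then D m else 0.
Proof.
move=> /funext->; rewrite (ip_suml (c := succn) (h := P)) => [|j _]; last first.
  exact: ip_integrable_PP.
case: ltnP => [md | dm].
  rewrite (bigD1 (Ordinal md)) //= ip_PP mulmx1 big1 ?addr0 // => j jm.
  by rewrite ip_PP_neq ?mulmx0 //; apply: contraNneq jm => /val_inj ->.
by rewrite big1 // => j _; rewrite ip_PP_neq ?mulmx0 // neq_ltn (leq_trans (ltn_ord j) dm).
Qed.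

Lemma Pspan_orthogonal_eq0 r d (f : R * R -> 'cV[R]_r) :
  in_Pspan d f -> (forall j, (j < d)%N -> ip W f (P j) = 0) -> forall z, f z = 0.
Proof.
move=> [D hD] orth z; rewrite hD big1 // => j _.
by have := orth j (ltn_ord j); rewrite (ip_Pspan_P _ hD) ltn_ord => ->; rewrite mul0mx.
Qed.

Lemma ip_Xcomb_l r s n e (C : forall k, 'M[R]_(r, k.+1)) (g : R * R -> 'cV[R]_s) :
  in_Pspan e g ->
  ip W (fun z => \sum_(k < n) C k *m Xvec k z) g = \sum_(k < n) C k *m ip W (Xvec k) g.
Proof.
move=> hg; apply: (ip_suml (c := succn) (h := @Xvec R)) => k _.
exact: ip_integrable_Pspan (in_Pspan_X k) hg.
Qed.

Lemma ip_XP_lt j m : (j < m)%N -> ip W (Xvec j) (P m) = 0.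
Proof.
by move=> jm; have [D hD] := in_Pspan_X j; rewrite (ip_Pspan_P _ hD) ltnNge jm.
Qed.

Lemma ip_XP_diag m : ip W (Xvec m) (P m) = invmx (G m m).
Proof.
have := ip_PP m; rewrite (ip_Xcomb_l _ (G m) (in_Pspan_P m)) big_ord_recr /=.
rewrite big1 ?add0r => [GX|k _]; last by rewrite ip_XP_lt ?mulmx0.
by rewrite -[LHS](mulKmx (hGinv m)) GX mulmx1.
Qed.

Hypothesis W_even : forall z, W (- z.1, - z.2) = W z.

Lemma Xvec_oppz k (z : R * R) a : Xvec k (- z.1, - z.2) a 0 = (-1) ^+ k * Xvec k z a 0.
Proof.
by rewrite !mxE /= (exprNn z.1) (exprNn z.2) mulrACA -exprD subnK // -ltnS.
Qed.

Lemma ip_XX_odd a b : odd (a + b) -> ip W (Xvec a) (Xvec b) = 0.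
Proof.
move=> ab; apply/matrixP => c e; rewrite !mxE.
apply: Rintegral_odd => [|z].
  exact: ip_integrable_Pspan (in_Pspan_X a) (in_Pspan_X b) c e.
rewrite !Xvec_oppz W_even mulrACA -exprD -signr_odd ab expr1.
by rewrite !mulN1r mulNr.
Qed.

Definition Gpart m (b : bool) k : 'M[R]_(m.+1, k.+1) :=
  if odd (m + k) == b then G m k else 0.

Definition Ppart m b z := \sum_(k < m.+1) Gpart m b k *m Xvec k z.

Lemma ip_Ppart_X m b l : odd (m + l) != b -> ip W (Ppart m b) (Xvec l) = 0.
Proof.
move=> mlb; rewrite (ip_Xcomb_l _ _ (in_Pspan_X l)) big1 // => k _.
rewrite /Gpart; case: eqP => [mkb | _]; last by rewrite mul0mx.
rewrite ip_XX_odd ?mulmx0 //; move: mlb; rewrite -mkb !oddD.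
by case: (odd m); case: (odd k); case: (odd l).
Qed.

Lemma ip_P_Ppart s e m (g : R * R -> 'cV[R]_s) : in_Pspan e g ->
  ip W (P m) g = ip W (Ppart m false) g + ip W (Ppart m true) g.
Proof.
move=> hg; rewrite !(ip_Xcomb_l _ _ hg) -big_split; apply: eq_bigr => k _ /=.
by rewrite /Gpart; case: (odd (m + k)); rewrite /= mul0mx ?addr0 ?add0r.
Qed.

Lemma Ppart_true_eq0 m z : Ppart m true z = 0.
Proof.
have span : in_Pspan m (Ppart m true).
  rewrite (_ : Ppart m true = fun z =>
      \sum_(k < m) Gpart m true k *m Xvec k z).
    apply: (in_Pspan_sum (f := @Xvec R)) => k km.
    exact: in_Pspan_widen km (in_Pspan_X k).
  apply/funext => y; rewrite /Ppart big_ord_recr /= /Gpart addnn odd_double.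
  by rewrite mul0mx addr0.
apply: (Pspan_orthogonal_eq0 span) => j jm.
rewrite (ip_sumr (c := succn) (h := @Xvec R)) => [|l _]; last first.
  exact: ip_integrable_Pspan span (in_Pspan_X l).
rewrite big1 // => l _; suff -> : ip W (Ppart m true) (Xvec l) = 0 by rewrite mul0mx.
have lm : (l < m)%N := leq_trans (ltn_ord l) jm.
(* For [l] of the parity of [m] the integrand is odd; otherwise [Ppart m true]
   is [P m] minus [Ppart m false], and both are orthogonal to [X_l]. *)
have [ml | /negbTE ml] := boolP (odd (m + l)); last by apply: ip_Ppart_X; rewrite ml.
have : ip W (P m) (Xvec l) = 0 by rewrite -trmx_ip ip_XP_lt ?trmx0.
by rewrite (ip_P_Ppart _ (in_Pspan_X l)) ip_Ppart_X ?add0r // ml.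
Qed.

Lemma Pvec_parity m : P m = Ppart m false.
Proof.
apply/funext => z; rewrite -[RHS]addr0 -(Ppart_true_eq0 m z) /Ppart /Pvec -big_split.
apply: eq_bigr => k _ /=; rewrite -mulmxDl /Gpart.
by case: (odd (m + k)); rewrite /= ?addr0 ?add0r.
Qed.

Lemma ip_XP_succ m : ip W (Xvec m.+1) (P m) = 0.
Proof.
by rewrite -trmx_ip Pvec_parity ip_Ppart_X ?trmx0 // addnS /= addnn odd_double.
Qed.

Lemma ip_XP_succ2 m :
  ip W (Xvec m.+2) (P m) = - (invmx (G m.+2 m.+2) *m G m.+2 m *m invmx (G m m)).
Proof.
have PP2 : ip W (P m.+2) (P m) = 0 by rewrite ip_PP_neq // gtn_eqF.
move: PP2; rewrite (ip_Xcomb_l _ (G m.+2) (in_Pspan_P m)) !big_ord_recr /=.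
rewrite big1 ?add0r => [|k _]; last by rewrite ip_XP_lt ?mulmx0.
rewrite ip_XP_diag ip_XP_succ mulmx0 addr0 => /eqP; rewrite addrC addr_eq0 => /eqP GX.
by rewrite -[LHS](mulKmx (hGinv m.+2)) GX mulmxN mulmxA.
Qed.

Definition x2_shift (i : 'I_2) k : 'M[R]_(k.+1, k.+3) :=
  \matrix_(a, b) (val b == a + (if val i == 0 then 0 else 2))%N%:R.

Lemma x2_Xvec i k (z : R * R) :
  xcoord i z ^+ 2 *: Xvec k z = x2_shift i k *m Xvec k.+2 z.
Proof.
apply/matrixP => a c; rewrite ord1 !mxE.
set sh := (if val i == 0 then 0 else 2)%N.
have ak : (a <= k)%N by rewrite -ltnS.
have ash : (a + sh < k.+3)%N by rewrite /sh; case: ifP => _; lia.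
rewrite (bigD1 (Ordinal ash)) //= big1 ?addr0 => [|b ba]; last first.
  rewrite !mxE (_ : (val b == _) = false) ?mul0r //.
  by apply: contraNF ba => e; apply/eqP/val_inj/eqP.
rewrite !mxE eqxx mul1r /xcoord /sh /=; clear ash sh; case: i => [[|[|//]] i2] /=.
  by rewrite addn0 (_ : (k.+2 - a = (k - a) + 2)%N) ?exprD; [ring | lia].
by rewrite (_ : (k.+2 - (a + 2) = k - a)%N) ?exprD; [ring | lia].
Qed.

Definition x2P i n z := xcoord i z ^+ 2 *: P n z.

Lemma ip_x2P i n m : ip W (x2P i n) (P m) =
  \sum_(k < n.+1) (G n k *m x2_shift i k) *m ip W (Xvec k.+2) (P m).
Proof.
rewrite (_ : x2P i n = fun z => \sum_(k < n.+1) (G n k *m x2_shift i k) *m Xvec k.+2 z).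
  apply: (ip_suml (h := fun k => Xvec k.+2) (fun k => G n k *m x2_shift i k)) => k _.
  exact: ip_integrable_Pspan (in_Pspan_X _) (in_Pspan_P _).
apply/funext => z; rewrite /x2P /Pvec scaler_sumr; apply: eq_bigr => k _.
by rewrite scalemxAr x2_Xvec mulmxA.
Qed.

Lemma trmx_ip_x2P i n m : (ip W (x2P i n) (P m))^T = ip W (x2P i m) (P n).
Proof.
by apply/matrixP => a b; rewrite !mxE; congr (wint W _); apply/funext => z; rewrite !mxE; ring.
Qed.

Lemma ip_x2P_succ2 i n :
  ip W (x2P i n) (P n.+2) = G n n *m x2_shift i n *m invmx (G n.+2 n.+2).
Proof.
rewrite ip_x2P big_ord_recr /= ip_XP_diag big1 ?add0r // => k _.
by rewrite ip_XP_lt ?mulmx0 // !ltnS.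
Qed.

Lemma ip_x2P_diag i n : ip W (x2P i n.+2) (P n.+2) =
  G n.+2 n *m x2_shift i n *m invmx (G n.+2 n.+2)
  - G n.+2 n.+2 *m x2_shift i n.+2 *m
      (invmx (G n.+4 n.+4) *m G n.+4 n.+2 *m invmx (G n.+2 n.+2)).
Proof.
rewrite ip_x2P !big_ord_recr /= big1 ?add0r => [|k _]; last first.
  by rewrite ip_XP_lt ?mulmx0 // !ltnS.
by rewrite ip_XP_diag ip_XP_succ ip_XP_succ2 mulmx0 addr0 mulmxN.
Qed.

End OrthonormalSystem.
End BivariateOrthogonality.

Theorem corollary4p6 (R : realType) (a40 a22 a04 a20 a02 : R)
  (h40 : 0 <= a40) (h22 : 0 <= a22) (h04 : 0 <= a04)
  (h1 : 0 < a40 + a22) (h2 : 0 < a22 + a04)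
  (G : coefFamily R)
  (hGinv : forall n : nat, G n n \in unitmx)
  (hON : orthonormal_system (freud_W a40 a22 a04 a20 a02) G)
  (F : forall (n m : nat) (i : 'I_2), 'M[R]_(n.+1, m.+1))
  (hF : forall (n : nat) (i : 'I_2) (z : R * R),
      xcoord i z ^+ 2 *: Pvec G n z
      = \sum_(m < n.+3) (F n m i *m Pvec G m z))
  (n : nat) (hn : (2 <= n)%N) (i : 'I_2) :
  F n n i =
    G n (n - 2)%N *m invmx (G (n - 2)%N (n - 2)%N) *m (F n (n - 2)%N i)^T
    - F n (n + 2)%N i *m G (n + 2)%N n *m invmx (G n n).
Proof.
(* The sign conditions on the coefficients only serve to make the moments of W
   finite; the integrability they provide is already part of [hON]. *)
set W := freud_W a40 a22 a04 a20 a02.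
have W_even (z : R * R) : W (- z.1, - z.2) = W z.
  by rewrite /W /freud_W /freud_q /=; congr (expR (- _)); ring.
have coefE n' m : (m < n'.+3)%N -> F n' m i = ip W (x2P G i n') (Pvec G m).
  by move=> m_lt; rewrite /W (ip_Pspan_P hON (D := fun j => F n' j i) m (hF n' i)) m_lt.
case: n hn => [|[|n]] // _; rewrite !subSS subn0 addn2.
rewrite !coefE; [rewrite trmx_ip_x2P | lia ..].
rewrite (ip_x2P_diag hON hGinv W_even) !(ip_x2P_succ2 hON hGinv) !mulmxA.
by rewrite (mulmxKV (hGinv n)).
Qed.
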